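(* Let $f,g,\phi,c,\eta,w,\alpha,x_0,G,\Psi$ satisfy the following: $f,g\in C(\mathbb{R}_0^+\times\mathbb{R}_0^+,\mathbb{R}_0^+)$ are nondecreasing in the first variable for each fixed second variable; $\phi\in C(\mathbb{R}_0^+,\mathbb{R}_0^+)$ is strictly increasing with $\lim_{x\to\infty}\phi(x)=\infty$; $c\in C(\mathbb{R}_0^+,\mathbb{R}^+)$ is nondecreasing; $\eta,w\in C(\mathbb{R}_0^+,\mathbb{R}_0^+)$ are nondecreasing and positive on $(0,\infty)$; $\alpha\in C^1(\mathbb{R}_0^+,\mathbb{R}_0^+)$ is nondecreasing with $\alpha(t)\le t$; and $x_0,G,\Psi$ are as in the context. Suppose $u\in C(\mathbb{R}_0^+,\mathbb{R}_0^+)$ satisfies, for all $t\ge0$, $$\phi(u(t))\le c(t)+\int_0^{\alpha(t)}f(t,s)\,\eta(u(s))\,w(u(s))\,ds+\int_0^{t}g(t,s)\,\eta(u(s))\,w(u(s))\,ds.$$ Let $\tau>0$ be such that for all $t\in[0,\tau]$, $$\Psi(G(c(t)))+\int_0^{\alpha(t)}f(t,s)\,ds+\int_0^{t}g(t,s)\,ds\in\mathrm{Dom}(\Psi^{-1}).$$ Then for all $t\in[0,\tau]$, $$u(t)\le\phi^{-1}\Big\{G^{-1}\Big(\Psi^{-1}\Big[\Psi(G(c(t)))+\int_0^{\alpha(t)}f(t,s)\,ds+\int_0^{t}g(t,s)\,ds\Big]\Big)\Big\}.$$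
   Context: $\mathbb{R}_0^+=[0,\infty)$, $\mathbb{R}^+=(0,\infty)$. $\phi^{-1}$ denotes the inverse of $\phi$, defined on $[\phi(0),\infty)$. The constant $x_0$ is a real number with $\phi(0)\le x_0<c(0)$ such that $\int_{x_0}^x\frac{ds}{\eta(\phi^{-1}(s))}<\infty$ for every $x\ge x_0$ and $\int_{x_0}^\infty\frac{ds}{\eta(\phi^{-1}(s))}=\infty$ (in the paper: $x_0>0$ may be required when $\int_0^x\frac{ds}{\eta(\phi^{-1}(s))}=\infty$, and $x_0\ge0$ is allowed when this integral is finite). Define $G:[x_0,\infty)\to[0,\infty)$ by $G(x)=\int_{x_0}^x\frac{ds}{\eta(\phi^{-1}(s))}$; it is a strictly increasing bijection with inverse $G^{-1}$. Fix $x_1>0$ and define, for $x>0$, $\Psi(x)=\int_{x_1}^x\frac{ds}{w(\phi^{-1}(G^{-1}(s)))}$; $\Psi$ is strictly increasing on $(0,\infty)$, $\Psi^{-1}$ is its inverse and $\mathrm{Dom}(\Psi^{-1})=\Psi((0,\infty))$. *)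

From Stdlib Require Import Reals Lra ClassicalEpsilon.
Open Scope R_scope.

(* Riemann integral of h over [a,b] (oriented, as RiemannInt); when h is
   Riemann integrable this is the value of RiemannInt (independent of the proof). *)
Definition Int (h : R -> R) (a b : R) : R :=
  epsilon (inhabits 0) (fun I => exists pr : Riemann_integrable h a b, RiemannInt pr = I).

Definition cont_nonneg (h : R -> R) : Prop :=
  forall x, 0 <= x -> forall eps, eps > 0 -> exists d, d > 0 /\
    forall y, 0 <= y -> Rabs (y - x) < d -> Rabs (h y - h x) < eps.

Definition cont2_nonneg (f : R -> R -> R) : Prop :=
  forall t s, 0 <= t -> 0 <= s -> forall eps, eps > 0 -> exists d, d > 0 /\
    forall t' s', 0 <= t' -> 0 <= s' -> Rabs (t' - t) < d -> Rabs (s' - s) < d ->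
      Rabs (f t' s' - f t s) < eps.

Definition C1_nonneg (h : R -> R) : Prop :=
  exists h' : R -> R, cont_nonneg h' /\
    forall x, 0 <= x -> forall eps, eps > 0 -> exists d, d > 0 /\
      forall y, 0 <= y -> y <> x -> Rabs (y - x) < d ->
        Rabs ((h y - h x) / (y - x) - h' x) < eps.

Definition inv_fun (f : R -> R) (D : R -> Prop) (y : R) : R :=
  epsilon (inhabits 0) (fun x => D x /\ f x = y).

Definition lim_right_at (F : R -> R) (x0 L : R) : Prop :=
  forall eps, eps > 0 -> exists d, d > 0 /\
    forall a, x0 < a < x0 + d -> Rabs (F a - L) < eps.

Definition impInt (h : R -> R) (x0 x : R) : R :=
  epsilon (inhabits 0) (fun L => lim_right_at (fun a => Int h a x) x0 L).

(* phi^{-1}, defined on [phi(0),oo) *)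
Definition phi_inv (phi : R -> R) : R -> R := inv_fun phi (fun x => 0 <= x).

Definition G_integrand (phi eta : R -> R) (s : R) : R := / eta (phi_inv phi s).

Definition Gfun (phi eta : R -> R) (x0 x : R) : R :=
  if Rle_dec x x0 then 0 else impInt (G_integrand phi eta) x0 x.

Definition G_inv (phi eta : R -> R) (x0 : R) : R -> R :=
  inv_fun (Gfun phi eta x0) (fun x => x0 <= x).

Definition Psi (phi eta w : R -> R) (x0 x1 x : R) : R :=
  Int (fun s => / w (phi_inv phi (G_inv phi eta x0 s))) x1 x.

Definition Psi_inv (phi eta w : R -> R) (x0 x1 : R) : R -> R :=
  inv_fun (Psi phi eta w x0 x1) (fun x => 0 < x).

Definition in_Dom_Psi_inv (phi eta w : R -> R) (x0 x1 y : R) : Prop :=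
  exists x, 0 < x /\ Psi phi eta w x0 x1 x = y.

(* Fix T in [0,tau].  Freezing the first argument of the kernels at T turns the
   right-hand side of the inequality into a nondecreasing function z of t in
   [0,T] (the [kernel_majorant]) with phi(u t) <= z t.  Since eta and w are
   nondecreasing, the increment of z over [t1,t2] is at most K(z t2) times the
   increment of the kernel mass A t = int_0^alpha(t) f(T,.) + int_0^t g(T,.),
   where K = (eta * w) o phi^-1 ([growth]).  The composite Psi o G has
   increments at most (b - a) / K(a), so Psi(G(z t)) has increments bounded by
   those of A, up to the factor K(z t2) / K(z t1).  A continuous-induction
   argument ([increment_comparison]) shows that this factor does not matter in
   the limit, which gives Psi(G(z T)) <= Psi(G(c T)) + A T; inverting Psi, G
   and phi, all strictly increasing, yields the bound on u T. *)

From Pilot Require Import Defs.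
From Stdlib Require Import Reals Ranalysis5 Lra ClassicalEpsilon FunctionalExtensionality Classical.
Open Scope R_scope.

Lemma Int_eq h a b (pr : Riemann_integrable h a b) : Int h a b = RiemannInt pr.
Proof.
  unfold Int.
  assert (Hex : exists I, exists pr0 : Riemann_integrable h a b, RiemannInt pr0 = I)
    by (exists (RiemannInt pr); exists pr; reflexivity).
  destruct (epsilon_spec (inhabits 0) _ Hex) as [pr' Hpr'].
  rewrite <- Hpr'. apply RiemannInt_P5.
Qed.

Lemma Int_zero h a : Int h a a = 0.
Proof. rewrite (Int_eq _ _ _ (RiemannInt_P7 h a)). apply RiemannInt_P9. Qed.

Lemma Int_chasles h a b c : Riemann_integrable h a b -> Riemann_integrable h b c ->
  Int h a b + Int h b c = Int h a c.
Proof.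
  intros p1 p2. rewrite (Int_eq _ _ _ p1), (Int_eq _ _ _ p2),
    (Int_eq _ _ _ (RiemannInt_P24 p1 p2)). apply RiemannInt_P26.
Qed.

Lemma Int_opp h a b : Riemann_integrable h a b -> Int h a b = - Int h b a.
Proof.
  intros p. rewrite (Int_eq _ _ _ p), (Int_eq _ _ _ (RiemannInt_P1 p)). apply RiemannInt_P8.
Qed.

Lemma Int_le h1 h2 a b : a <= b -> Riemann_integrable h1 a b -> Riemann_integrable h2 a b ->
  (forall x, a <= x <= b -> h1 x <= h2 x) -> Int h1 a b <= Int h2 a b.
Proof.
  intros Hab p1 p2 H. rewrite (Int_eq _ _ _ p1), (Int_eq _ _ _ p2).
  apply RiemannInt_P19; auto. intros; apply H; lra.
Qed.

Lemma Int_bound h a b l v : a <= b -> Riemann_integrable h a b ->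
  (forall x, a <= x <= b -> l <= h x <= v) -> l * (b - a) <= Int h a b <= v * (b - a).
Proof.
  intros Hab p H. rewrite (Int_eq _ _ _ p). apply RiemannInt_const_bound; auto.
  intros; apply H; lra.
Qed.

Lemma Int_nonneg h a b : a <= b -> Riemann_integrable h a b ->
  (forall x, a <= x <= b -> 0 <= h x) -> 0 <= Int h a b.
Proof.
  intros Hab p H. rewrite (Int_eq _ _ _ p).
  pose proof (RiemannInt_P19 (RiemannInt_P14 a b 0) p Hab) as K.
  rewrite RiemannInt_P15 in K. replace 0 with (0 * (b - a)) by ring.
  apply K. intros; unfold fct_cte; apply H; lra.
Qed.

Lemma Int_scal h a b k : Riemann_integrable h a b ->
  Int (fun x => k * h x) a b = k * Int h a b.
Proof.
  intros p.
  pose proof (RiemannInt_P14 a b 0) as p0.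
  pose proof (RiemannInt_P10 k p0 p) as p3.
  assert (E : (fun x => fct_cte 0 x + k * h x) = (fun x => k * h x)).
  { apply functional_extensionality; intro x; unfold fct_cte; ring. }
  pose proof (RiemannInt_P13 p0 p p3) as H13.
  rewrite RiemannInt_P15 in H13.
  rewrite <- E, (Int_eq _ _ _ p3), (Int_eq _ _ _ p), H13. ring.
Qed.

Lemma Rabs_le_inv x M : Rabs x <= M -> - M <= x <= M.
Proof. unfold Rabs; destruct Rcase_abs; lra. Qed.

Lemma Int_abs_bound h x y M : Riemann_integrable h x y ->
  (forall s, Rmin x y <= s <= Rmax x y -> Rabs (h s) <= M) ->
  Rabs (Int h x y) <= M * Rabs (y - x).
Proof.
  intros p H. destruct (Rle_dec x y) as [Hxy | Hxy].
  - rewrite Rmin_left, Rmax_right in H by lra. rewrite (Rabs_right (y - x)) by lra.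
    destruct (Int_bound h x y (- M) M Hxy p) as [Hl Hu].
    { intros s Hs. apply Rabs_le_inv, H, Hs. }
    apply Rabs_le. lra.
  - rewrite Rmin_right, Rmax_left in H by lra. rewrite (Rabs_left (y - x)) by lra.
    rewrite (Int_opp h x y p), Rabs_Ropp.
    destruct (Int_bound h y x (- M) M ltac:(lra) (RiemannInt_P1 p)) as [Hl Hu].
    { intros s Hs. apply Rabs_le_inv, H, Hs. }
    apply Rabs_le. lra.
Qed.

Lemma Rmax0_lip x y : Rabs (Rmax 0 y - Rmax 0 x) <= Rabs (y - x).
Proof. unfold Rmax; repeat destruct Rle_dec; unfold Rabs; repeat destruct Rcase_abs; lra. Qed.

(* Continuity on [0,oo) is continuity of the extension [x |-> h (max 0 x)] to the
   whole line; this lets the continuity lemmas of the Reals library act on [cont_nonneg]. *)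
Lemma cont_nonneg_ext h : cont_nonneg h <-> continuity (fun x => h (Rmax 0 x)).
Proof.
  split.
  - intros H x. unfold continuity_pt, continue_in, limit1_in, limit_in; simpl; unfold R_dist.
    intros eps Heps.
    destruct (H (Rmax 0 x) (Rmax_l 0 x) eps Heps) as [d [Hd Hy]].
    exists d; split; [lra |]. intros y [_ Hyx]. apply Hy; [apply Rmax_l |].
    eapply Rle_lt_trans; [apply Rmax0_lip | exact Hyx].
  - intros H x Hx eps Heps.
    destruct (H x eps Heps) as [d [Hd Hy]]. simpl in Hy; unfold R_dist in Hy.
    exists d; split; [lra |]. intros y Hy0 Hyx.
    destruct (Req_dec y x) as [-> | Hne]; [rewrite Rminus_diag, Rabs_R0; lra |].
    specialize (Hy y (conj (conj I (not_eq_sym Hne)) Hyx)).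
    rewrite !Rmax_right in Hy by lra. exact Hy.
Qed.

Lemma cont_nonneg_pt h x : cont_nonneg h -> 0 < x -> continuity_pt h x.
Proof.
  intros H Hx. apply (continuity_pt_locally_ext (fun y => h (Rmax 0 y)) h x x Hx).
  - intros y Hy. unfold Rdist in Hy. apply Rabs_def2 in Hy. rewrite Rmax_right by lra. reflexivity.
  - apply cont_nonneg_ext, H.
Qed.

Lemma cont_nonneg_plus h k : cont_nonneg h -> cont_nonneg k -> cont_nonneg (fun x => h x + k x).
Proof.
  intros Hh Hk. apply cont_nonneg_ext.
  exact (continuity_plus _ _ (proj1 (cont_nonneg_ext h) Hh) (proj1 (cont_nonneg_ext k) Hk)).
Qed.

Lemma cont_nonneg_mult h k : cont_nonneg h -> cont_nonneg k -> cont_nonneg (fun x => h x * k x).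
Proof.
  intros Hh Hk. apply cont_nonneg_ext.
  exact (continuity_mult _ _ (proj1 (cont_nonneg_ext h) Hh) (proj1 (cont_nonneg_ext k) Hk)).
Qed.

Lemma cont_nonneg_comp h k : cont_nonneg h -> cont_nonneg k -> (forall x, 0 <= x -> 0 <= k x) ->
  cont_nonneg (fun x => h (k x)).
Proof.
  intros Hh Hk Hpos x Hx eps Heps.
  destruct (Hh (k x) (Hpos x Hx) eps Heps) as [d1 [Hd1 H1]].
  destruct (Hk x Hx d1 Hd1) as [d2 [Hd2 H2]].
  exists d2; split; [exact Hd2 |]. intros y Hy Hyx. apply H1; auto.
Qed.

Lemma cont2_nonneg_section f t : cont2_nonneg f -> 0 <= t -> cont_nonneg (f t).
Proof.
  intros Hf Ht s Hs eps Heps. destruct (Hf t s Ht Hs eps Heps) as [d [Hd H]].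
  exists d; split; [exact Hd |]. intros y Hy Hys. apply H; auto; try lra.
  rewrite Rminus_diag, Rabs_R0; lra.
Qed.

Lemma cont_nonneg_integrable h a b : 0 <= a -> 0 <= b -> cont_nonneg h ->
  Riemann_integrable h a b.
Proof.
  intros Ha Hb Hh.
  assert (Hint : forall p q, 0 <= p <= q -> Riemann_integrable h p q).
  { intros p q Hpq. apply (@Riemann_integrable_ext (fun x => h (Rmax 0 x)) h).
    - intros x Hx. rewrite Rmin_left, Rmax_right in Hx by lra. rewrite Rmax_right by lra. reflexivity.
    - apply continuity_implies_RiemannInt; [lra |]. intros x _. apply cont_nonneg_ext, Hh. }
  destruct (Rle_dec a b); [apply Hint; lra | apply RiemannInt_P1, Hint; lra].
Qed.

Lemma cont_nonneg_bounded h b : cont_nonneg h -> 0 <= b ->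
  exists M, forall x, 0 <= x <= b -> Rabs (h x) <= M.
Proof.
  intros Hh Hb.
  destruct (continuity_ab_maj (fun x => Rabs (h (Rmax 0 x))) 0 b Hb) as [m [Hm _]].
  { intros x _. apply (continuity_comp (fun x => h (Rmax 0 x)) Rabs); [apply cont_nonneg_ext, Hh | apply Rcontinuity_abs]. }
  exists (Rabs (h (Rmax 0 m))). intros x Hx. specialize (Hm x Hx).
  rewrite Rmax_right in Hm by lra. exact Hm.
Qed.

Lemma lipschitz_radius M r eps : 0 < r -> 0 < eps ->
  exists d, 0 < d /\ d <= r /\ forall z, 0 <= z < d -> M * z < eps.
Proof.
  intros Hr Heps. exists (Rmin r (eps / (Rabs M + 1))).
  pose proof (Rmin_l r (eps / (Rabs M + 1))). pose proof (Rmin_r r (eps / (Rabs M + 1))).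
  pose proof (Rabs_pos M). pose proof (Rle_abs M).
  split; [apply Rmin_pos; [lra | apply Rdiv_lt_0_compat; lra] |]. split; [lra |].
  intros z Hz. apply Rle_lt_trans with ((Rabs M + 1) * z); [nra |].
  apply Rlt_le_trans with ((Rabs M + 1) * (eps / (Rabs M + 1))); [apply Rmult_lt_compat_l; lra |].
  right; field; lra.
Qed.

Lemma local_lipschitz_cont_nonneg F :
  (forall x, 0 <= x -> exists r M, 0 < r /\
     forall y, 0 <= y -> Rabs (y - x) < r -> Rabs (F y - F x) <= M * Rabs (y - x)) ->
  cont_nonneg F.
Proof.
  intros H x Hx eps Heps. destruct (H x Hx) as [r [M [Hr HL]]].
  destruct (lipschitz_radius M r eps Hr Heps) as [d [Hd [Hdr Hsmall]]].
  exists d; split; [exact Hd |]. intros y Hy Hyx.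
  eapply Rle_lt_trans; [apply HL; auto; lra |]. apply Hsmall. split; [apply Rabs_pos | exact Hyx].
Qed.

Lemma local_lipschitz_cont_pt F p r M : 0 < r ->
  (forall y, Rabs (y - p) < r -> Rabs (F y - F p) <= M * Rabs (y - p)) ->
  continuity_pt F p.
Proof.
  intros Hr HL. unfold continuity_pt, continue_in, limit1_in, limit_in; simpl; unfold R_dist.
  intros eps Heps. destruct (lipschitz_radius M r eps Hr Heps) as [d [Hd [Hdr Hsmall]]].
  exists d; split; [exact Hd |]. intros y [_ Hyx].
  eapply Rle_lt_trans; [apply HL; lra |]. apply Hsmall. split; [apply Rabs_pos | exact Hyx].
Qed.

(* A C^1 function is locally Lipschitz, hence continuous. *)
Lemma C1_nonneg_cont h : C1_nonneg h -> cont_nonneg h.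
Proof.
  intros [h' [_ Hd]]. apply local_lipschitz_cont_nonneg. intros x Hx.
  destruct (Hd x Hx 1 Rlt_0_1) as [d [Hd0 Hy]].
  exists d, (Rabs (h' x) + 1). split; [exact Hd0 |]. intros y Hy0 Hyx.
  destruct (Req_dec y x) as [-> | Hne]; [rewrite !Rminus_diag, Rabs_R0; lra |].
  specialize (Hy y Hy0 Hne Hyx).
  set (q := (h y - h x) / (y - x)) in *.
  replace (h y - h x) with (q * (y - x)) by (unfold q; field; lra).
  rewrite Rabs_mult. apply Rmult_le_compat_r; [apply Rabs_pos |].
  pose proof (Rabs_triang (q - h' x) (h' x)). replace (q - h' x + h' x) with q in * by ring. lra.
Qed.

Lemma cont_nonneg_primitive h : cont_nonneg h -> cont_nonneg (fun x => Int h 0 x).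
Proof.
  intros Hh. apply local_lipschitz_cont_nonneg. intros x Hx.
  destruct (cont_nonneg_bounded h (x + 1) Hh ltac:(lra)) as [M HM].
  exists 1, M. split; [lra |]. intros y Hy Hyx. apply Rabs_def2 in Hyx.
  rewrite <- (Int_chasles h 0 x y) by (apply cont_nonneg_integrable; auto; lra).
  replace (Int h 0 x + Int h x y - Int h 0 x) with (Int h x y) by ring.
  apply Int_abs_bound; [apply cont_nonneg_integrable; auto |].
  intros s Hs. apply HM. unfold Rmin, Rmax in Hs. destruct Rle_dec in Hs; lra.
Qed.

Lemma Int_from0_diff h a b : cont_nonneg h -> 0 <= a -> 0 <= b ->
  Int h 0 b - Int h 0 a = Int h a b.
Proof.
  intros Hh Ha Hb. rewrite <- (Int_chasles h 0 a b); [ring | |]; apply cont_nonneg_integrable; auto; lra.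
Qed.

Lemma pt_cont_integrable h lo p q : (forall s, lo < s -> continuity_pt h s) ->
  lo < p -> lo < q -> Riemann_integrable h p q.
Proof.
  intros Hc Hp Hq. destruct (Rle_dec p q).
  - apply continuity_implies_RiemannInt; auto. intros; apply Hc; lra.
  - apply RiemannInt_P1, continuity_implies_RiemannInt; [lra |]. intros; apply Hc; lra.
Qed.

Lemma continuous_induction (P : R -> Prop) a b : a <= b -> P a ->
  (forall m, a <= m <= b -> exists e, e > 0 /\
     forall t1 t2, a <= t1 -> t1 <= t2 -> t2 <= b -> m - e < t1 -> t2 < m + e ->
       P t1 -> P t2) ->
  P b.
Proof.
  intros Hab Pa Hloc.
  set (E := fun t => a <= t <= b /\ P t).
  destruct (completeness E) as [m [Hub Hlub]].
  { exists b. intros x [Hx _]. lra. }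
  { exists a. split; [lra | exact Pa]. }
  assert (Ham : a <= m) by (apply Hub; split; [lra | exact Pa]).
  assert (Hmb : m <= b) by (apply Hlub; intros x [Hx _]; lra).
  destruct (Hloc m (conj Ham Hmb)) as [e [He Hstep]].
  assert (Hnear : exists t, E t /\ m - e < t).
  { apply NNPP. intros Hn.
    assert (Hup : is_upper_bound E (m - e)).
    { intros x Hx. destruct (Rle_dec x (m - e)) as [| Hx2]; auto.
      exfalso; apply Hn; exists x; split; auto; lra. }
    pose proof (Hlub _ Hup). lra. }
  destruct Hnear as [t [[Ht Pt] Hte]].
  assert (Htm : t <= m) by (apply Hub; split; auto).
  assert (Pm : P m) by (apply (Hstep t m); auto; lra).
  destruct (Rlt_le_dec m b) as [Hlt | Hge]; [| replace b with m by lra; exact Pm].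
  exfalso.
  pose proof (Rmin_l b (m + e / 2)). pose proof (Rmin_r b (m + e / 2)).
  assert (Hmt2 : m < Rmin b (m + e / 2)) by (apply Rmin_glb_lt; lra).
  set (t2 := Rmin b (m + e / 2)) in *.
  assert (Et2 : E t2) by (split; [lra | apply (Hstep m t2); auto; lra]).
  pose proof (Hub t2 Et2). lra.
Qed.

Lemma le_of_small_multiples X C : 0 <= C -> (forall del, del > 0 -> X <= del * C) -> X <= 0.
Proof.
  intros HC H. destruct (Rle_dec X 0) as [| Hn]; auto.
  assert (Hdel : X / (2 * (C + 1)) > 0) by (apply Rdiv_lt_0_compat; lra).
  specialize (H _ Hdel).
  assert (X / (2 * (C + 1)) * C < X).
  { apply Rle_lt_trans with (X / 2); [| lra].
    replace (X / 2) with (X / (2 * (C + 1)) * (C + 1)) by (field; lra).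
    apply Rmult_le_compat_l; lra. }
  lra.
Qed.

(* For every [del > 0] one shows by
   continuous induction that the defect [(H - A) t - (H - A) 0] is at most
   [del * (k t / k 0 - 1)]; letting [del] go to 0 gives the claim. *)
Lemma increment_comparison (H A k : R -> R) (T : R) : 0 <= T -> cont_nonneg A ->
  (forall t, 0 <= t <= T -> 0 < k t) ->
  (forall t1 t2, 0 <= t1 -> t1 <= t2 -> t2 <= T -> k t1 <= k t2) ->
  (forall t1 t2, 0 <= t1 -> t1 <= t2 -> t2 <= T ->
     H t2 - H t1 <= (A t2 - A t1) * (k t2 / k t1)) ->
  H T - H 0 <= A T - A 0.
Proof.
  intros HT HAc Hkpos Hkmon Hinc.
  assert (Hk0 : 0 < k 0) by (apply Hkpos; lra).
  assert (Hratio : forall t1 t2, 0 <= t1 -> t1 <= t2 -> t2 <= T -> 1 <= k t2 / k t1).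
  { intros t1 t2 H1 H2 H3. pose proof (Hkpos t1 ltac:(lra)).
    apply Rmult_le_reg_r with (k t1); [lra |].
    unfold Rdiv. rewrite Rmult_assoc, Rinv_l, Rmult_1_l, Rmult_1_r by lra. apply Hkmon; lra. }
  cut ((H T - A T) - (H 0 - A 0) <= 0); [lra |].
  apply (le_of_small_multiples _ (k T / k 0 - 1)); [pose proof (Hratio 0 T); lra |].
  intros del Hdel.
  apply (continuous_induction
    (fun t => (H t - A t) - (H 0 - A 0) <= del * (k t / k 0 - 1)) 0 T HT).
  { replace (k 0 / k 0) with 1 by (field; lra). lra. }
  intros m Hm. destruct (HAc m (proj1 Hm) (del / 2) ltac:(lra)) as [e [He HAm]].
  exists e. split; [exact He |]. intros t1 t2 H1 H12 H2 Hm1 Hm2 HP1.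
  assert (HdA : A t2 - A t1 <= del).
  { pose proof (HAm t1 H1 ltac:(apply Rabs_def1; lra)) as HA1.
    pose proof (HAm t2 ltac:(lra) ltac:(apply Rabs_def1; lra)) as HA2.
    apply Rabs_def2 in HA1. apply Rabs_def2 in HA2. lra. }
  pose proof (Hkpos t1 ltac:(lra)) as Hk1.
  pose proof (Hratio 0 t1 ltac:(lra) H1 ltac:(lra)) as Hr1.
  pose proof (Hratio t1 t2 H1 H12 H2) as Hr2.
  pose proof (Hinc t1 t2 H1 H12 H2) as Hstep.
  replace (k t2 / k 0) with (k t1 / k 0 * (k t2 / k t1)) by (field; lra).
  set (r1 := k t1 / k 0) in *. set (r2 := k t2 / k t1) in *.
  assert ((A t2 - A t1) * (r2 - 1) <= del * (r2 - 1)) by (apply Rmult_le_compat_r; lra).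
  assert (0 <= del * ((r1 - 1) * (r2 - 1))) by (apply Rmult_le_pos; [lra | apply Rmult_le_pos; lra]).
  lra.
Qed.

Lemma inv_fun_spec F D y : (exists x, D x /\ F x = y) ->
  D (inv_fun F D y) /\ F (inv_fun F D y) = y.
Proof. intros H. unfold inv_fun. apply (epsilon_spec (inhabits 0) _ H). Qed.

Lemma incr_reflect_le F (D : R -> Prop) x y : (forall a b, D a -> a < b -> F a < F b) ->
  D x -> D y -> F x <= F y -> x <= y.
Proof.
  intros Hinc Hx Hy H. destruct (Rle_dec x y) as [| Hn]; auto.
  pose proof (Hinc y x Hy ltac:(lra)). lra.
Qed.

Lemma inverse_cont (F g : R -> R) (lo y0 d0 : R) :
  (forall x y, lo < x -> x < y -> F x < F y) -> d0 > 0 ->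
  (forall y, Rabs (y - y0) < d0 -> lo < g y /\ F (g y) = y) ->
  continuity_pt g y0.
Proof.
  intros Hmon Hd0 Hg. unfold continuity_pt, continue_in, limit1_in, limit_in.
  simpl; unfold R_dist. intros eps Heps.
  destruct (Hg y0) as [Hlo Hx]. { rewrite Rminus_diag, Rabs_R0; lra. }
  set (x := g y0) in *.
  set (e := Rmin eps (x - lo) / 2).
  assert (He : 0 < e /\ e < eps /\ lo < x - e).
  { unfold e. pose proof (Rmin_l eps (x - lo)). pose proof (Rmin_r eps (x - lo)).
    assert (0 < Rmin eps (x - lo)) by (apply Rmin_pos; lra). lra. }
  assert (F1 : F (x - e) < y0) by (rewrite <- Hx; apply Hmon; lra).
  assert (F2 : y0 < F (x + e)) by (rewrite <- Hx at 1; apply Hmon; lra).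
  set (d := Rmin d0 (Rmin (y0 - F (x - e)) (F (x + e) - y0))).
  assert (Hd : 0 < d /\ d <= d0 /\ d <= y0 - F (x - e) /\ d <= F (x + e) - y0).
  { unfold d. pose proof (Rmin_l d0 (Rmin (y0 - F (x - e)) (F (x + e) - y0))).
    pose proof (Rmin_r d0 (Rmin (y0 - F (x - e)) (F (x + e) - y0))).
    pose proof (Rmin_l (y0 - F (x - e)) (F (x + e) - y0)).
    pose proof (Rmin_r (y0 - F (x - e)) (F (x + e) - y0)).
    split; [apply Rmin_pos; [lra | apply Rmin_pos; lra] | lra]. }
  exists d. split; [lra |]. intros y [_ Hy].
  destruct (Hg y ltac:(lra)) as [Hgy HFy].
  apply Rabs_def2 in Hy. apply Rabs_def1.
  - destruct (Rlt_le_dec (g y) (x + e)) as [| Hc]; [lra |].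
    assert (F (x + e) <= F (g y)).
    { destruct (Rle_lt_or_eq_dec _ _ Hc) as [Hc' | <-]; [left; apply Hmon; lra | lra]. }
    lra.
  - destruct (Rlt_le_dec (x - e) (g y)) as [| Hc]; [lra |].
    assert (F (g y) <= F (x - e)).
    { destruct (Rle_lt_or_eq_dec _ _ Hc) as [Hc' | ->]; [left; apply Hmon; lra | lra]. }
    lra.
Qed.

Lemma lim_right_diff h x0 a b La Lb : x0 < a ->
  lim_right_at (fun p => Int h p a) x0 La ->
  lim_right_at (fun p => Int h p b) x0 Lb ->
  (forall p, x0 < p < a -> Riemann_integrable h p a) -> Riemann_integrable h a b ->
  Lb - La = Int h a b.
Proof.
  intros Ha HLa HLb Hi1 Hi2.
  apply Rminus_diag_uniq. destruct (Req_dec (Lb - La - Int h a b) 0) as [| Hne]; auto.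
  set (eps := Rabs (Lb - La - Int h a b)). assert (Heps : eps > 0) by (apply Rabs_pos_lt, Hne).
  destruct (HLa (eps / 2) ltac:(lra)) as [d1 [Hd1 H1]].
  destruct (HLb (eps / 2) ltac:(lra)) as [d2 [Hd2 H2]].
  set (m := Rmin (Rmin d1 d2) (a - x0)).
  assert (Hm : 0 < m /\ m <= d1 /\ m <= d2 /\ m <= a - x0).
  { unfold m. pose proof (Rmin_l (Rmin d1 d2) (a - x0)). pose proof (Rmin_r (Rmin d1 d2) (a - x0)).
    pose proof (Rmin_l d1 d2). pose proof (Rmin_r d1 d2).
    assert (0 < Rmin (Rmin d1 d2) (a - x0)) by (repeat apply Rmin_pos; lra). lra. }
  set (p := x0 + m / 2).
  specialize (H1 p ltac:(unfold p; lra)). specialize (H2 p ltac:(unfold p; lra)).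
  rewrite <- (Int_chasles h p a b (Hi1 p ltac:(unfold p; lra)) Hi2) in H2.
  apply Rabs_def2 in H1. apply Rabs_def2 in H2.
  unfold eps in *. unfold Rabs in *. destruct Rcase_abs; lra.
Qed.

Lemma lim_right_ge F x0 L l r : lim_right_at F x0 L -> 0 < r ->
  (forall a, x0 < a < x0 + r -> l <= F a) -> l <= L.
Proof.
  intros HL Hr Hl. destruct (Rle_dec l L) as [| Hn]; auto.
  destruct (HL (l - L) ltac:(lra)) as [d [Hd Hy]].
  set (a := x0 + Rmin d r / 2).
  pose proof (Rmin_l d r). pose proof (Rmin_r d r). pose proof (Rmin_pos d r Hd Hr).
  specialize (Hy a ltac:(unfold a; lra)). specialize (Hl a ltac:(unfold a; lra)).
  apply Rabs_def2 in Hy. lra.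
Qed.

(* [K y = eta(phi^-1 y) * w(phi^-1 y)]: the growth factor of the nonlinearity
   [eta * w] expressed in the variable [phi(u)]. *)
Definition growth (phi eta w : R -> R) (y : R) : R :=
  eta (phi_inv phi y) * w (phi_inv phi y).

Section Transforms.

Variables (phi eta w : R -> R) (x0 x1 : R).
Hypothesis Hphi_cont : cont_nonneg phi.
Hypothesis Hphi_inc : forall x y, 0 <= x -> x < y -> phi x < phi y.
Hypothesis Hphi_inf : forall M, exists X, 0 <= X /\ forall x, X <= x -> M < phi x.
Hypothesis Heta_cont : cont_nonneg eta.
Hypothesis Heta_mon : forall x y, 0 <= x -> x <= y -> eta x <= eta y.
Hypothesis Heta_pos : forall x, 0 < x -> 0 < eta x.
Hypothesis Hx0_lo : phi 0 <= x0.
Hypothesis Hx0_fin : forall x, x0 < x ->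
  exists L, lim_right_at (fun a => Int (G_integrand phi eta) a x) x0 L.
Hypothesis Hx0_inf : forall M, exists x, x0 <= x /\ M < Gfun phi eta x0 x.

Local Notation G := (Gfun phi eta x0).
Local Notation gI := (G_integrand phi eta).

(* By the intermediate value theorem, [phi] maps [0,oo) onto [phi 0,oo). *)
Lemma phi_surj y : phi 0 <= y -> exists x, 0 <= x /\ phi x = y.
Proof.
  intros Hy. destruct (Req_dec y (phi 0)) as [-> | Hne]; [exists 0; split; [lra | reflexivity] |].
  destruct (Hphi_inf y) as [X [HX HXg]]. specialize (HXg X (Rle_refl X)).
  assert (HX0 : 0 < X).
  { destruct (Rle_lt_or_eq_dec _ _ HX) as [| E]; auto. subst X. lra. }
  destruct (IVT_interv (fun t => phi (Rmax 0 t) - y) 0 X) as [z [Hz Hfz]].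
  - intros a _. apply continuity_pt_minus; [apply cont_nonneg_ext, Hphi_cont |].
    apply continuity_pt_const. intros ? ?; reflexivity.
  - exact HX0.
  - rewrite Rmax_right by lra. lra.
  - rewrite Rmax_right by lra. lra.
  - exists z. rewrite Rmax_right in Hfz by lra. split; lra.
Qed.

Lemma phi_inv_spec y : phi 0 <= y -> 0 <= phi_inv phi y /\ phi (phi_inv phi y) = y.
Proof. intros Hy. apply inv_fun_spec, phi_surj, Hy. Qed.

Lemma phi_inv_pos y : phi 0 < y -> 0 < phi_inv phi y.
Proof.
  intros Hy. destruct (phi_inv_spec y ltac:(lra)) as [H1 H2].
  destruct (Rle_lt_or_eq_dec _ _ H1) as [| E]; auto. rewrite <- E in H2. lra.
Qed.

Lemma phi_inv_mono y1 y2 : phi 0 <= y1 -> y1 <= y2 -> phi_inv phi y1 <= phi_inv phi y2.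
Proof.
  intros H1 H2. destruct (phi_inv_spec y1 H1), (phi_inv_spec y2 ltac:(lra)).
  apply (incr_reflect_le phi (fun x => 0 <= x)); auto. lra.
Qed.

Lemma phi_inv_cont y : phi 0 < y -> continuity_pt (phi_inv phi) y.
Proof.
  intros Hy. apply (inverse_cont phi (phi_inv phi) 0 y (y - phi 0)).
  - intros; apply Hphi_inc; lra.
  - lra.
  - intros y' Hy'. apply Rabs_def2 in Hy'.
    split; [apply phi_inv_pos; lra | apply phi_inv_spec; lra].
Qed.

Lemma G_integrand_pos s : x0 < s -> 0 < gI s.
Proof. intros Hs. apply Rinv_0_lt_compat, Heta_pos, phi_inv_pos; auto; lra. Qed.

Lemma G_integrand_antitone s1 s2 : x0 < s1 -> s1 <= s2 -> gI s2 <= gI s1.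
Proof.
  intros H1 H2. apply Rinv_le_contravar; [apply Heta_pos, phi_inv_pos; auto; lra |].
  apply Heta_mon; [apply phi_inv_spec; auto; lra | apply phi_inv_mono; auto; lra].
Qed.

Lemma G_integrand_cont s : x0 < s -> continuity_pt gI s.
Proof.
  intros Hs. apply (continuity_pt_inv (fun y => eta (phi_inv phi y))).
  - apply (continuity_pt_comp (phi_inv phi) eta); [apply phi_inv_cont; auto; lra |].
    apply cont_nonneg_pt; auto. apply phi_inv_pos; auto; lra.
  - apply Rgt_not_eq, Heta_pos, phi_inv_pos; auto; lra.
Qed.

Lemma G_limit x : x0 < x -> lim_right_at (fun a => Int gI a x) x0 (G x).
Proof.
  intros Hx. unfold Gfun. destruct (Rle_dec x x0); [lra |].
  unfold impInt. apply (epsilon_spec (inhabits 0) _ (Hx0_fin x Hx)).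
Qed.

Lemma G_diff a b : x0 < a -> x0 < b -> G b - G a = Int gI a b.
Proof.
  intros Ha Hb. apply (lim_right_diff gI x0 a b); auto using G_limit.
  - intros p Hp. apply (pt_cont_integrable gI x0); auto using G_integrand_cont; lra.
  - apply (pt_cont_integrable gI x0); auto using G_integrand_cont.
Qed.

Lemma G_at_x0 : G x0 = 0.
Proof. unfold Gfun. destruct (Rle_dec x0 x0); [reflexivity | lra]. Qed.

Lemma G_nonneg a : x0 < a -> 0 <= G a.
Proof.
  intros Ha. apply (lim_right_ge _ x0 _ 0 (a - x0) (G_limit a Ha)); [lra |].
  intros p Hp. apply Int_nonneg; [lra | apply (pt_cont_integrable gI x0); auto using G_integrand_cont; lra |].
  intros s Hs. left; apply G_integrand_pos; lra.
Qed.

(* On (x0,oo) the increment of [G] is squeezed between the extreme values of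
   its antitone integrand. *)
Lemma G_increment_bounds a b : x0 < a -> a <= b ->
  (b - a) * gI b <= G b - G a <= (b - a) * gI a.
Proof.
  intros Ha Hab. rewrite G_diff by lra. rewrite !(Rmult_comm (b - a)).
  apply Int_bound; [lra | apply (pt_cont_integrable gI x0); auto using G_integrand_cont; lra |].
  intros s Hs. split; apply G_integrand_antitone; lra.
Qed.

Lemma G_strict a b : x0 <= a -> a < b -> G a < G b.
Proof.
  assert (Hopen : forall a b, x0 < a -> a < b -> G a < G b).
  { intros a' b' Ha Hab. destruct (G_increment_bounds a' b' Ha ltac:(lra)) as [Hl _].
    pose proof (G_integrand_pos b' ltac:(lra)).
    assert (0 < (b' - a') * gI b') by (apply Rmult_lt_0_compat; lra). lra. }
  intros Ha Hab. destruct (Rle_lt_or_eq_dec _ _ Ha) as [Ha' | <-]; [now apply Hopen |].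
  rewrite G_at_x0. pose proof (G_nonneg ((x0 + b) / 2) ltac:(lra)).
  pose proof (Hopen ((x0 + b) / 2) b ltac:(lra) ltac:(lra)). lra.
Qed.

Lemma G_pos a : x0 < a -> 0 < G a.
Proof. intros Ha. rewrite <- G_at_x0. apply G_strict; lra. Qed.

Lemma G_cont p : x0 < p -> continuity_pt G p.
Proof.
  intros Hp. set (m := (x0 + p) / 2).
  apply (local_lipschitz_cont_pt G p (p - m) (gI m)); [unfold m; lra |].
  intros y Hy. apply Rabs_def2 in Hy.
  rewrite G_diff by (unfold m in *; lra).
  apply Int_abs_bound; [apply (pt_cont_integrable gI x0); auto using G_integrand_cont; unfold m in *; lra |].
  intros s Hs. assert (Hs' : m < s) by (unfold Rmin, Rmax in Hs; destruct Rle_dec in Hs; lra).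
  rewrite Rabs_right by (left; apply G_integrand_pos; unfold m in *; lra).
  apply G_integrand_antitone; unfold m in *; lra.
Qed.

Lemma G_small_near_x0 x eps : x0 < x -> eps > 0 -> exists a, x0 < a < x /\ G a < eps.
Proof.
  intros Hx Heps. destruct (G_limit x Hx eps Heps) as [d [Hd Hy]].
  set (a := x0 + Rmin d (x - x0) / 2).
  pose proof (Rmin_l d (x - x0)). pose proof (Rmin_r d (x - x0)).
  pose proof (Rmin_pos d (x - x0) Hd ltac:(lra)).
  exists a. split; [unfold a; lra |].
  specialize (Hy a ltac:(unfold a; lra)). rewrite <- (G_diff a x) in Hy by (unfold a; lra).
  apply Rabs_def2 in Hy. lra.
Qed.

Lemma G_surj s : 0 < s -> exists x, x0 <= x /\ G x = s.
Proof.
  intros Hs. destruct (Hx0_inf s) as [x [Hx Hgx]].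
  assert (Hx' : x0 < x).
  { destruct (Rle_lt_or_eq_dec _ _ Hx) as [| E]; auto. subst x. rewrite G_at_x0 in Hgx. lra. }
  destruct (G_small_near_x0 x s Hx' Hs) as [a [Ha Hga]].
  destruct (IVT_interv (fun t => G t - s) a x) as [z [Hz Hfz]]; try lra.
  - intros q Hq. apply continuity_pt_minus; [apply G_cont; lra |].
    apply continuity_pt_const. intros ? ?; reflexivity.
  - exists z. split; lra.
Qed.

Lemma G_inv_spec s : 0 < s -> x0 < G_inv phi eta x0 s /\ G (G_inv phi eta x0 s) = s.
Proof.
  intros Hs. destruct (inv_fun_spec G (fun x => x0 <= x) s (G_surj s Hs)) as [H1 H2].
  fold (G_inv phi eta x0 s) in H1, H2. split; auto.
  destruct (Rle_lt_or_eq_dec _ _ H1) as [| E]; auto. rewrite <- E, G_at_x0 in H2. lra.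
Qed.

Lemma G_inv_G a : x0 < a -> G_inv phi eta x0 (G a) = a.
Proof.
  intros Ha. destruct (G_inv_spec (G a) (G_pos a Ha)) as [H1 H2].
  apply Rle_antisym; apply (incr_reflect_le G (fun x => x0 <= x)); auto using G_strict; lra.
Qed.

Lemma G_inv_mono s1 s2 : 0 < s1 -> s1 <= s2 -> G_inv phi eta x0 s1 <= G_inv phi eta x0 s2.
Proof.
  intros H1 H2. destruct (G_inv_spec s1 H1), (G_inv_spec s2 ltac:(lra)).
  apply (incr_reflect_le G (fun x => x0 <= x)); auto using G_strict; lra.
Qed.

Lemma G_inv_cont s : 0 < s -> continuity_pt (G_inv phi eta x0) s.
Proof.
  intros Hs. apply (inverse_cont G (G_inv phi eta x0) x0 s s); [| lra |].
  - intros; apply G_strict; lra.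
  - intros y Hy. apply Rabs_def2 in Hy. apply G_inv_spec; lra.
Qed.

Hypothesis Hw_cont : cont_nonneg w.
Hypothesis Hw_mon : forall x y, 0 <= x -> x <= y -> w x <= w y.
Hypothesis Hw_pos : forall x, 0 < x -> 0 < w x.
Hypothesis Hx1 : 0 < x1.

Local Notation Psi := (Psi phi eta w x0 x1).
Local Notation hP := (fun s => / w (phi_inv phi (G_inv phi eta x0 s))).

Lemma Psi_integrand_pos s : 0 < s -> 0 < hP s.
Proof.
  intros Hs. destruct (G_inv_spec s Hs).
  apply Rinv_0_lt_compat, Hw_pos, phi_inv_pos; auto; lra.
Qed.

Lemma Psi_integrand_antitone s1 s2 : 0 < s1 -> s1 <= s2 -> hP s2 <= hP s1.
Proof.
  intros H1 H2. destruct (G_inv_spec s1 H1), (G_inv_spec s2 ltac:(lra)).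
  pose proof (G_inv_mono s1 s2 H1 H2).
  apply Rinv_le_contravar; [apply Hw_pos, phi_inv_pos; auto; lra |].
  apply Hw_mon; [apply phi_inv_spec; auto; lra | apply phi_inv_mono; auto; lra].
Qed.

Lemma Psi_integrand_cont s : 0 < s -> continuity_pt hP s.
Proof.
  intros Hs. destruct (G_inv_spec s Hs).
  apply (continuity_pt_inv (fun y => w (phi_inv phi (G_inv phi eta x0 y)))).
  - apply (continuity_pt_comp (G_inv phi eta x0) (fun y => w (phi_inv phi y)));
      [apply G_inv_cont; auto |].
    apply (continuity_pt_comp (phi_inv phi) w); [apply phi_inv_cont; auto; lra |].
    apply cont_nonneg_pt; auto. apply phi_inv_pos; auto; lra.
  - apply Rgt_not_eq, Hw_pos, phi_inv_pos; auto; lra.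
Qed.

Lemma Psi_diff a b : 0 < a -> 0 < b -> Psi b - Psi a = Int hP a b.
Proof.
  intros Ha Hb. unfold Defs.Psi.
  rewrite <- (Int_chasles hP x1 a b); [ring | |];
    apply (pt_cont_integrable hP 0); auto using Psi_integrand_cont.
Qed.

Lemma Psi_strict a b : 0 < a -> a < b -> Psi a < Psi b.
Proof.
  intros Ha Hab. cut (0 < Psi b - Psi a); [lra |]. rewrite Psi_diff by lra.
  assert (Hl : hP b * (b - a) <= Int hP a b).
  { apply (Int_bound hP a b (hP b) (hP a)); [lra | |].
    - apply (pt_cont_integrable hP 0); auto using Psi_integrand_cont; lra.
    - intros x Hx; split; apply Psi_integrand_antitone; lra. }
  pose proof (Psi_integrand_pos b ltac:(lra)).
  assert (0 < hP b * (b - a)) by (apply Rmult_lt_0_compat; lra). lra.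
Qed.

Lemma growth_pos y : phi 0 < y -> 0 < growth phi eta w y.
Proof.
  intros Hy. unfold growth.
  apply Rmult_lt_0_compat; [apply Heta_pos | apply Hw_pos]; apply phi_inv_pos; auto.
Qed.

Lemma growth_mono y1 y2 : phi 0 < y1 -> y1 <= y2 -> growth phi eta w y1 <= growth phi eta w y2.
Proof.
  intros H1 H2. unfold growth.
  pose proof (phi_inv_mono y1 y2 ltac:(lra) H2). pose proof (phi_inv_pos y1 H1).
  pose proof (Heta_pos _ (phi_inv_pos y1 H1)). pose proof (Hw_pos _ (phi_inv_pos y1 H1)).
  apply Rmult_le_compat; try apply Heta_mon; try apply Hw_mon; lra.
Qed.

(* The composite [Psi o G] grows, between [a] and [b], by at most [(b - a) / K a]:
   both integrands are antitone, so each is bounded by its value at the left end. *)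
Lemma Psi_G_increment a b : x0 < a -> a <= b ->
  Psi (G b) - Psi (G a) <= (b - a) / growth phi eta w a.
Proof.
  intros Ha Hab.
  pose proof (G_pos a Ha) as Ga.
  destruct (G_increment_bounds a b Ha Hab) as [HGl HGu].
  assert (HGab : 0 <= (b - a) * gI b).
  { apply Rmult_le_pos; [lra |]. left; apply G_integrand_pos; lra. }
  rewrite Psi_diff by lra.
  assert (Hint : Int hP (G a) (G b) <= hP (G a) * (G b - G a)).
  { apply (Int_bound hP _ _ 0); [lra | apply (pt_cont_integrable hP 0); auto using Psi_integrand_cont; lra |].
    intros x Hx. split; [left; apply Psi_integrand_pos; lra | apply Psi_integrand_antitone; lra]. }
  cbv beta in Hint. rewrite G_inv_G in Hint by lra.
  pose proof (phi_inv_pos a ltac:(lra)) as Hpa.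
  pose proof (Rinv_0_lt_compat _ (Hw_pos _ Hpa)) as Hw.
  pose proof (Heta_pos _ Hpa) as He.
  unfold growth, G_integrand in *. apply (Rle_trans _ _ _ Hint).
  replace ((b - a) / (eta (phi_inv phi a) * w (phi_inv phi a)))
    with (/ w (phi_inv phi a) * ((b - a) * / eta (phi_inv phi a)))
    by (field; split; apply Rgt_not_eq; [apply Hw_pos, Hpa | exact He]).
  apply Rmult_le_compat_l; lra.
Qed.

Section Majorant.

Variables (f g : R -> R -> R) (c alpha u : R -> R) (T : R).
Hypothesis Hf_cont : cont2_nonneg f.
Hypothesis Hf_nn : forall t s, 0 <= t -> 0 <= s -> 0 <= f t s.
Hypothesis Hf_mon : forall s t1 t2, 0 <= s -> 0 <= t1 -> t1 <= t2 -> f t1 s <= f t2 s.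
Hypothesis Hg_cont : cont2_nonneg g.
Hypothesis Hg_nn : forall t s, 0 <= t -> 0 <= s -> 0 <= g t s.
Hypothesis Hg_mon : forall s t1 t2, 0 <= s -> 0 <= t1 -> t1 <= t2 -> g t1 s <= g t2 s.
Hypothesis Hc_mon : forall t1 t2, 0 <= t1 -> t1 <= t2 -> c t1 <= c t2.
Hypothesis Heta_nn : forall x, 0 <= x -> 0 <= eta x.
Hypothesis Hw_nn : forall x, 0 <= x -> 0 <= w x.
Hypothesis Halpha_C1 : C1_nonneg alpha.
Hypothesis Halpha_nn : forall t, 0 <= t -> 0 <= alpha t.
Hypothesis Halpha_mon : forall t1 t2, 0 <= t1 -> t1 <= t2 -> alpha t1 <= alpha t2.
Hypothesis Halpha_le : forall t, 0 <= t -> alpha t <= t.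
Hypothesis Hx0_hi : x0 < c 0.
Hypothesis Hu_cont : cont_nonneg u.
Hypothesis Hu_nn : forall t, 0 <= t -> 0 <= u t.
Hypothesis Hu : forall t, 0 <= t ->
  phi (u t) <= c t
    + Int (fun s => f t s * eta (u s) * w (u s)) 0 (alpha t)
    + Int (fun s => g t s * eta (u s) * w (u s)) 0 t.
Hypothesis HT : 0 <= T.

(* Freezing the first argument of the kernels at [T] turns the right-hand side
   of the integral inequality into a nondecreasing majorant of [phi o u] on [0,T]. *)
Definition kernel_majorant (t : R) : R :=
  c T + Int (fun s => f T s * eta (u s) * w (u s)) 0 (alpha t)
      + Int (fun s => g T s * eta (u s) * w (u s)) 0 t.

Definition kernel_mass (t : R) : R := Int (f T) 0 (alpha t) + Int (g T) 0 t.

Lemma weight_nonneg s : 0 <= s -> 0 <= eta (u s) * w (u s).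
Proof. intros Hs. apply Rmult_le_pos; [apply Heta_nn | apply Hw_nn]; auto. Qed.

Lemma weighted_cont (k : R -> R -> R) t : cont2_nonneg k -> 0 <= t ->
  cont_nonneg (fun s => k t s * eta (u s) * w (u s)).
Proof.
  intros Hk Ht.
  apply cont_nonneg_mult; [apply cont_nonneg_mult; [now apply cont2_nonneg_section |] |];
    apply cont_nonneg_comp; auto.
Qed.

Lemma alpha_at_0 : alpha 0 = 0.
Proof. pose proof (Halpha_nn 0 (Rle_refl 0)). pose proof (Halpha_le 0 (Rle_refl 0)). lra. Qed.

Lemma majorant_at_0 : kernel_majorant 0 = c T.
Proof. unfold kernel_majorant. rewrite alpha_at_0, !Int_zero. ring. Qed.

Lemma kernel_mass_at_0 : kernel_mass 0 = 0.
Proof. unfold kernel_mass. rewrite alpha_at_0, !Int_zero. ring. Qed.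

Lemma majorant_diff t1 t2 : 0 <= t1 -> t1 <= t2 ->
  kernel_majorant t2 - kernel_majorant t1 =
    Int (fun s => f T s * eta (u s) * w (u s)) (alpha t1) (alpha t2)
  + Int (fun s => g T s * eta (u s) * w (u s)) t1 t2.
Proof.
  intros H1 H2. pose proof (Halpha_nn t1 H1). pose proof (Halpha_nn t2 ltac:(lra)).
  unfold kernel_majorant.
  rewrite <- (Int_from0_diff _ (alpha t1) (alpha t2)), <- (Int_from0_diff _ t1 t2)
    by (auto using weighted_cont; lra).
  ring.
Qed.

Lemma kernel_mass_diff t1 t2 : 0 <= t1 -> t1 <= t2 ->
  kernel_mass t2 - kernel_mass t1 = Int (f T) (alpha t1) (alpha t2) + Int (g T) t1 t2.
Proof.
  intros H1 H2. pose proof (Halpha_nn t1 H1). pose proof (Halpha_nn t2 ltac:(lra)).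
  unfold kernel_mass.
  rewrite <- (Int_from0_diff _ (alpha t1) (alpha t2)), <- (Int_from0_diff _ t1 t2)
    by (auto using cont2_nonneg_section; lra).
  ring.
Qed.

Lemma majorant_mono t1 t2 : 0 <= t1 -> t1 <= t2 -> kernel_majorant t1 <= kernel_majorant t2.
Proof.
  intros H1 H2. pose proof (majorant_diff t1 t2 H1 H2).
  pose proof (Halpha_nn t1 H1). pose proof (Halpha_mon t1 t2 H1 H2).
  assert (0 <= Int (fun s => f T s * eta (u s) * w (u s)) (alpha t1) (alpha t2)).
  { apply Int_nonneg; [lra | apply cont_nonneg_integrable; auto using weighted_cont; lra |].
    intros x Hx. rewrite Rmult_assoc. apply Rmult_le_pos; [apply Hf_nn | apply weight_nonneg]; lra. }
  assert (0 <= Int (fun s => g T s * eta (u s) * w (u s)) t1 t2).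
  { apply Int_nonneg; [lra | apply cont_nonneg_integrable; auto using weighted_cont; lra |].
    intros x Hx. rewrite Rmult_assoc. apply Rmult_le_pos; [apply Hg_nn | apply weight_nonneg]; lra. }
  lra.
Qed.

Lemma majorant_gt_x0 t : 0 <= t -> x0 < kernel_majorant t.
Proof.
  intros Ht. pose proof (majorant_mono 0 t (Rle_refl 0) Ht) as Hz. rewrite majorant_at_0 in Hz.
  pose proof (Hc_mon 0 T (Rle_refl 0) HT). lra.
Qed.

(* Since the kernels are nondecreasing in their first argument, the majorant
   dominates [phi o u] on [0,T]. *)
Lemma majorant_dominates s : 0 <= s <= T -> phi (u s) <= kernel_majorant s.
Proof.
  intros [Hs HsT]. pose proof (Hu s Hs). pose proof (Hc_mon s T Hs HsT).
  pose proof (Halpha_nn s Hs).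
  assert (Int (fun r => f s r * eta (u r) * w (u r)) 0 (alpha s)
          <= Int (fun r => f T r * eta (u r) * w (u r)) 0 (alpha s)).
  { apply Int_le; [lra | apply cont_nonneg_integrable; auto using weighted_cont; lra
                   | apply cont_nonneg_integrable; auto using weighted_cont; lra |].
    intros x Hx. rewrite !Rmult_assoc.
    apply Rmult_le_compat_r; [apply weight_nonneg | apply Hf_mon]; lra. }
  assert (Int (fun r => g s r * eta (u r) * w (u r)) 0 s
          <= Int (fun r => g T r * eta (u r) * w (u r)) 0 s).
  { apply Int_le; [lra | apply cont_nonneg_integrable; auto using weighted_cont; lra
                   | apply cont_nonneg_integrable; auto using weighted_cont; lra |].
    intros x Hx. rewrite !Rmult_assoc.
    apply Rmult_le_compat_r; [apply weight_nonneg | apply Hg_mon]; lra. }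
  unfold kernel_majorant. lra.
Qed.

Lemma weight_le_growth t r : 0 <= r -> r <= t -> t <= T ->
  eta (u r) * w (u r) <= growth phi eta w (kernel_majorant t).
Proof.
  intros Hr Hrt HtT. pose proof (majorant_gt_x0 t ltac:(lra)).
  destruct (phi_inv_spec (kernel_majorant t) ltac:(lra)) as [Hp1 Hp2].
  assert (Hur : u r <= phi_inv phi (kernel_majorant t)).
  { apply (incr_reflect_le phi (fun x => 0 <= x)); auto. rewrite Hp2.
    pose proof (majorant_dominates r ltac:(lra)). pose proof (majorant_mono r t Hr Hrt). lra. }
  pose proof (Hu_nn r Hr). unfold growth.
  apply Rmult_le_compat; [apply Heta_nn | apply Hw_nn | apply Heta_mon | apply Hw_mon]; auto.
Qed.

Lemma majorant_increment t1 t2 : 0 <= t1 -> t1 <= t2 -> t2 <= T ->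
  kernel_majorant t2 - kernel_majorant t1
    <= growth phi eta w (kernel_majorant t2) * (kernel_mass t2 - kernel_mass t1).
Proof.
  intros H1 H2 H3. rewrite majorant_diff, kernel_mass_diff by auto.
  set (K := growth phi eta w (kernel_majorant t2)).
  pose proof (Halpha_nn t1 H1). pose proof (Halpha_mon t1 t2 H1 H2). pose proof (Halpha_le t2 ltac:(lra)).
  assert (I1 : Int (fun s => f T s * eta (u s) * w (u s)) (alpha t1) (alpha t2)
               <= Int (fun s => K * f T s) (alpha t1) (alpha t2)).
  { apply Int_le; [lra | | |].
    - apply cont_nonneg_integrable; auto using weighted_cont; lra.
    - apply Riemann_integrable_scal, cont_nonneg_integrable; auto using cont2_nonneg_section; lra.
    - intros x Hx. rewrite Rmult_assoc, (Rmult_comm K).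
      apply Rmult_le_compat_l; [apply Hf_nn | apply weight_le_growth]; lra. }
  assert (I2 : Int (fun s => g T s * eta (u s) * w (u s)) t1 t2 <= Int (fun s => K * g T s) t1 t2).
  { apply Int_le; [lra | | |].
    - apply cont_nonneg_integrable; auto using weighted_cont; lra.
    - apply Riemann_integrable_scal, cont_nonneg_integrable; auto using cont2_nonneg_section; lra.
    - intros x Hx. rewrite Rmult_assoc, (Rmult_comm K).
      apply Rmult_le_compat_l; [apply Hg_nn | apply weight_le_growth]; lra. }
  rewrite Int_scal in I1, I2 by (apply cont_nonneg_integrable; auto using cont2_nonneg_section; lra).
  lra.
Qed.

Lemma kernel_mass_cont : cont_nonneg kernel_mass.
Proof.
  apply cont_nonneg_plus.
  - apply (cont_nonneg_comp (fun x => Int (f T) 0 x)); auto using C1_nonneg_cont.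
    apply cont_nonneg_primitive, cont2_nonneg_section; auto.
  - apply cont_nonneg_primitive, cont2_nonneg_section; auto.
Qed.

(* Chaining [Psi_G_increment] with [majorant_increment] gives increments
   bounded by [dA * K(z t2) / K(z t1)], and [increment_comparison] sums them. *)
Lemma majorant_Psi_bound :
  Psi (G (kernel_majorant T)) <= Psi (G (c T)) + kernel_mass T.
Proof.
  pose (k := fun t => growth phi eta w (kernel_majorant t)).
  assert (Hkpos : forall t, 0 <= t -> 0 < k t).
  { intros t Ht. apply growth_pos. pose proof (majorant_gt_x0 t Ht). lra. }
  pose proof (increment_comparison (fun t => Psi (G (kernel_majorant t))) kernel_mass k T HT
    kernel_mass_cont) as Hcmp.
  cbv beta in Hcmp. rewrite majorant_at_0, kernel_mass_at_0 in Hcmp.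
  enough (Psi (G (kernel_majorant T)) - Psi (G (c T)) <= kernel_mass T - 0) by lra.
  apply Hcmp.
  - intros t Ht. apply Hkpos, Ht.
  - intros t1 t2 H1 H2 H3. apply growth_mono; [pose proof (majorant_gt_x0 t1 H1); lra |].
    apply majorant_mono; auto.
  - intros t1 t2 H1 H2 H3.
    pose proof (majorant_gt_x0 t1 H1). pose proof (Hkpos t1 H1). pose proof (Hkpos t2 ltac:(lra)).
    pose proof (majorant_increment t1 t2 H1 H2 H3) as Hz.
    eapply Rle_trans; [apply Psi_G_increment; auto; apply majorant_mono; auto |].
    fold (k t1). fold (k t2) in Hz.
    unfold Rdiv. apply Rmult_le_reg_r with (k t1); [lra |].
    rewrite Rmult_assoc, Rinv_l, Rmult_1_r by lra.
    replace ((kernel_mass t2 - kernel_mass t1) * (k t2 * / k t1) * k t1)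
      with (k t2 * (kernel_mass t2 - kernel_mass t1)) by (field; lra).
    exact Hz.
Qed.

End Majorant.

End Transforms.

Theorem theorem2
  (f g : R -> R -> R) (phi c eta w alpha u : R -> R) (x0 x1 tau : R)
  (* f, g in C(R0+ x R0+, R0+), nondecreasing in the first variable *)
  (Hf_cont : cont2_nonneg f)
  (Hf_nn : forall t s, 0 <= t -> 0 <= s -> 0 <= f t s)
  (Hf_mon : forall s t1 t2, 0 <= s -> 0 <= t1 -> t1 <= t2 -> f t1 s <= f t2 s)
  (Hg_cont : cont2_nonneg g)
  (Hg_nn : forall t s, 0 <= t -> 0 <= s -> 0 <= g t s)
  (Hg_mon : forall s t1 t2, 0 <= s -> 0 <= t1 -> t1 <= t2 -> g t1 s <= g t2 s)
  (* phi in C(R0+, R0+), strictly increasing, phi(x) -> oo *)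
  (Hphi_cont : cont_nonneg phi)
  (Hphi_nn : forall x, 0 <= x -> 0 <= phi x)
  (Hphi_inc : forall x y, 0 <= x -> x < y -> phi x < phi y)
  (Hphi_inf : forall M, exists X, 0 <= X /\ forall x, X <= x -> M < phi x)
  (* c in C(R0+, R+), nondecreasing *)
  (Hc_cont : cont_nonneg c)
  (Hc_pos : forall t, 0 <= t -> 0 < c t)
  (Hc_mon : forall t1 t2, 0 <= t1 -> t1 <= t2 -> c t1 <= c t2)
  (* eta, w in C(R0+, R0+), nondecreasing, positive on (0,oo) *)
  (Heta_cont : cont_nonneg eta)
  (Heta_nn : forall x, 0 <= x -> 0 <= eta x)
  (Heta_mon : forall x y, 0 <= x -> x <= y -> eta x <= eta y)
  (Heta_pos : forall x, 0 < x -> 0 < eta x)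
  (Hw_cont : cont_nonneg w)
  (Hw_nn : forall x, 0 <= x -> 0 <= w x)
  (Hw_mon : forall x y, 0 <= x -> x <= y -> w x <= w y)
  (Hw_pos : forall x, 0 < x -> 0 < w x)
  (* alpha in C^1(R0+, R0+), nondecreasing, alpha(t) <= t *)
  (Halpha_C1 : C1_nonneg alpha)
  (Halpha_nn : forall t, 0 <= t -> 0 <= alpha t)
  (Halpha_mon : forall t1 t2, 0 <= t1 -> t1 <= t2 -> alpha t1 <= alpha t2)
  (Halpha_le : forall t, 0 <= t -> alpha t <= t)
  (* x0 : phi(0) <= x0 < c(0), int_{x0}^x finite for x >= x0, int_{x0}^oo = oo *)
  (Hx0_lo : phi 0 <= x0)
  (Hx0_hi : x0 < c 0)
  (Hx0_fin : forall x, x0 < x ->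
     exists L, lim_right_at (fun a => Int (G_integrand phi eta) a x) x0 L)
  (Hx0_inf : forall M, exists x, x0 <= x /\ M < Gfun phi eta x0 x)
  (Hx1 : 0 < x1)
  (* u in C(R0+, R0+) satisfying the integral inequality *)
  (Hu_cont : cont_nonneg u)
  (Hu_nn : forall t, 0 <= t -> 0 <= u t)
  (Hu : forall t, 0 <= t ->
     phi (u t) <= c t
       + Int (fun s => f t s * eta (u s) * w (u s)) 0 (alpha t)
       + Int (fun s => g t s * eta (u s) * w (u s)) 0 t)
  (Htau : 0 < tau)
  (Hdom : forall t, 0 <= t <= tau ->
     in_Dom_Psi_inv phi eta w x0 x1
       (Psi phi eta w x0 x1 (Gfun phi eta x0 (c t))
          + Int (f t) 0 (alpha t) + Int (g t) 0 t)) :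
  forall t, 0 <= t <= tau ->
    u t <= phi_inv phi (G_inv phi eta x0 (Psi_inv phi eta w x0 x1
             (Psi phi eta w x0 x1 (Gfun phi eta x0 (c t))
                + Int (f t) 0 (alpha t) + Int (g t) 0 t))).
Proof.
  intros T [HT HTtau].
  set (z := kernel_majorant eta w f g c alpha u T T).
  set (V := Psi phi eta w x0 x1 (Gfun phi eta x0 (c T)) + Int (f T) 0 (alpha T) + Int (g T) 0 T).
  assert (Huz : phi (u T) <= z) by (eapply majorant_dominates; try eassumption; lra).
  assert (Hz : x0 < z) by (eapply majorant_gt_x0; eassumption).
  assert (HzV : Psi phi eta w x0 x1 (Gfun phi eta x0 z) <= V).
  { eapply Rle_trans; [eapply majorant_Psi_bound; eassumption |]. unfold kernel_mass, V. lra. }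
  destruct (Hdom T (conj HT HTtau)) as [y [Hy HyV]]. fold V in HyV.
  destruct (inv_fun_spec (Psi phi eta w x0 x1) (fun x => 0 < x) V (ex_intro _ y (conj Hy HyV)))
    as [Hs HPs].
  fold (Psi_inv phi eta w x0 x1 V) in Hs, HPs. set (s := Psi_inv phi eta w x0 x1 V) in *.
  assert (HGz : Gfun phi eta x0 z <= s).
  { apply (incr_reflect_le (Psi phi eta w x0 x1) (fun x => 0 < x)); [| | exact Hs | lra].
    - intros a b Ha Hab. eapply Psi_strict; eassumption.
    - eapply G_pos; eassumption. }
  assert (HGs : x0 < G_inv phi eta x0 s /\ Gfun phi eta x0 (G_inv phi eta x0 s) = s)
    by (eapply G_inv_spec; eassumption).
  assert (HzG : z <= G_inv phi eta x0 s).
  { apply (incr_reflect_le (Gfun phi eta x0) (fun x => x0 <= x)); [| lra | lra | lra].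
    intros a b Ha Hab. eapply G_strict; eassumption. }
  assert (Hphis : 0 <= phi_inv phi (G_inv phi eta x0 s)
                  /\ phi (phi_inv phi (G_inv phi eta x0 s)) = G_inv phi eta x0 s)
    by (eapply phi_inv_spec; try eassumption; lra).
  apply (incr_reflect_le phi (fun x => 0 <= x)); auto; lra.
Qed.
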